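(* Let $b\in\mathbb{R}$ and let $(r,W,V,N,\delta)$ be a smooth solution, defined on an interval $(-\infty,\rho_* )$ with $r>0$ and $N>0$ there, of the system \[ \dot r = rN,\quad \dot W = V,\quad \dot V = (2N-\kappa)V - W(1-W^2),\quad \dot N = (\kappa-N)N - \frac{2V^2}{r^2},\quad \big(e^{-\delta}N\big)^{\cdot} = (\kappa-N)e^{-\delta}N, \] where $\dot{}=d/d\rho$ and \[ \kappa=\frac{1}{2N}\left(1+N^2+\frac{2V^2}{r^2}-\frac{(1-W^2)^2}{r^2}\right), \] which is regular at the origin with parameter $b$, i.e. as $\rho\to-\infty$, \[ r\sim e^{\rho},\quad W\sim -1+be^{2\rho},\quad V\sim 2be^{2\rho},\quad N\sim 1-2b^2e^{2\rho},\quad \delta\sim -4b^2e^{2\rho}, \] (these being the leading terms of the asymptotic expansion of the unique local solution determined by $b$, which correspond to $W=-1+br^2+O(r^4)$, $A=N^2=1-4b^2r^2+O(r^4)$, $\delta=-4b^2r^2+O(r^4)$ in the areal radius $r$). Then for all $\rho\in(-\infty,\rho_* )$, \[ 1\le \kappa(\rho)\le 2-N(\rho). \]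
   Context: This system is the static spherically symmetric Einstein–Yang–Mills system with gauge group $SU(2)$, for the metric $ds^2=-e^{-2\delta}N^2dt^2+r^2(d\rho^2+d\Omega^2)$ (with $d\Omega^2$ the round metric on the unit 2-sphere) and Yang–Mills potential $W$; the radial coordinate $\rho$ is related to the areal radius $r$ by $dr=rN\,d\rho$, and $N=\sqrt{A}$ where $A$ is the metric function in $ds^2=-e^{-2\delta}A\,dt^2+dr^2/A+r^2d\Omega^2$. *)

From Stdlib Require Import Reals.
From Coquelicot Require Import Coquelicot.
Open Scope R_scope.

Definition kappa (r W V N : R) : R :=
  / (2 * N) * (1 + N ^ 2 + 2 * V ^ 2 / r ^ 2 - (1 - W ^ 2) ^ 2 / r ^ 2).

Definition little_o_e2 (f : R -> R) : Prop :=
  is_lim (fun x => f x / exp (2 * x)) m_infty 0.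

Definition regular_at_origin (b : R) (r W V N delta : R -> R) : Prop :=
  is_lim (fun x => r x / exp x) m_infty 1 /\
  little_o_e2 (fun x => W x - (-1 + b * exp (2 * x))) /\
  little_o_e2 (fun x => V x - 2 * b * exp (2 * x)) /\
  little_o_e2 (fun x => N x - (1 - 2 * b ^ 2 * exp (2 * x))) /\
  little_o_e2 (fun x => delta x - (- 4 * b ^ 2 * exp (2 * x))).

Definition eym_solution (rho_s : Rbar) (r W V N delta : R -> R) : Prop :=
  forall x : R, Rbar_lt x rho_s ->
    (forall n : nat, ex_derive_n r n x /\ ex_derive_n W n x /\ ex_derive_n V n x
                     /\ ex_derive_n N n x /\ ex_derive_n delta n x) /\
    0 < r x /\ 0 < N x /\
    let k := kappa (r x) (W x) (V x) (N x) in
    is_derive r x (r x * N x) /\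
    is_derive W x (V x) /\
    is_derive V x ((2 * N x - k) * V x - W x * (1 - W x ^ 2)) /\
    is_derive N x ((k - N x) * N x - 2 * V x ^ 2 / r x ^ 2) /\
    is_derive (fun y => exp (- delta y) * N y) x ((k - N x) * (exp (- delta x) * N x)).

(* Along a solution, kappa satisfies the Riccati equation
   kappa' = 1 - kappa^2 + 2 V^2 / r^2.  With M = e^(-delta) N this makes
   (kappa - 1) e^rho r M  and  (2 - N - kappa) e^(2 rho) M / r  nondecreasing, with
   derivatives 2 e^rho M V^2 / r and 3 (1 - N)^2 e^(2 rho) M / r.  Regularity at the origin
   gives r ~ e^rho and kappa, N, M -> 1, so both quantities tend to 0 as rho -> -oo; hence
   they are nonnegative, and dividing by the positive factors gives the two bounds. *)

From Stdlib Require Import Reals Lra.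
From Coquelicot Require Import Coquelicot.
Open Scope R_scope.

(* [M] stands for [e^(-delta) N]; only its equation is used, not delta itself. *)
Definition eym_ode_at (r W V N M : R -> R) (y : R) : Prop :=
  0 < r y /\ 0 < N y /\
  is_derive r y (r y * N y) /\
  is_derive W y (V y) /\
  is_derive V y ((2 * N y - kappa (r y) (W y) (V y) (N y)) * V y - W y * (1 - W y ^ 2)) /\
  is_derive N y ((kappa (r y) (W y) (V y) (N y) - N y) * N y - 2 * V y ^ 2 / r y ^ 2) /\
  is_derive M y ((kappa (r y) (W y) (V y) (N y) - N y) * M y).

Lemma is_lim_mult_finite (f g : R -> R) (x : Rbar) (a c : R) :
  is_lim f x a -> is_lim g x c -> is_lim (fun y => f y * g y) x (a * c).
Proof. intros Hf Hg. exact (is_lim_mult f g x a c Hf Hg I). Qed.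

Lemma is_lim_inv_finite (f : R -> R) (x : Rbar) (a : R) :
  is_lim f x a -> a <> 0 -> is_lim (fun y => / f y) x (/ a).
Proof. intros Hf Ha. apply (is_lim_inv f x a Hf). congruence. Qed.

Lemma is_lim_opp_finite (f : R -> R) (x : Rbar) (a : R) :
  is_lim f x a -> is_lim (fun y => - f y) x (- a).
Proof. exact (is_lim_opp f x a). Qed.

Lemma is_lim_exp_finite (f : R -> R) (x : Rbar) (a : R) :
  is_lim f x a -> is_lim (fun y => exp (f y)) x (exp a).
Proof.
  intros Hf. eapply filterlim_comp; [exact Hf|].
  apply (ex_derive_continuous exp). auto_derive. trivial.
Qed.

Lemma is_lim_exp_2_m : is_lim (fun y => exp (2 * y)) m_infty 0.
Proof.
  apply (is_lim_ext (fun y => exp y * exp y)).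
  - intros y. rewrite <- exp_plus. f_equal. ring.
  - rewrite <- (Rmult_0_l 0). apply is_lim_mult_finite; apply is_lim_exp_m.
Qed.

Lemma is_lim_finite_eq (f : R -> R) (x : Rbar) (a c : R) :
  is_lim f x a -> a = c -> is_lim f x c.
Proof. now intros Hf <-. Qed.

Ltac is_lim_finite :=
  repeat first
    [ eassumption | apply is_lim_const | apply is_lim_exp_m | apply is_lim_exp_2_m
    | apply is_lim_plus' | apply is_lim_minus' | apply is_lim_mult_finite
    | apply is_lim_opp_finite | apply is_lim_exp_finite
    | apply is_lim_inv_finite; [is_lim_finite | lra] ].

Ltac rewrite_derive D :=
  match type of D with
  | is_derive ?f ?y _ => rewrite (is_derive_unique (fun t : R => f t) y _ D)
  end.

Section Monotone_quantities.

Variables r W V N M : R -> R.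

Let k (t : R) : R := kappa (r t) (W t) (V t) (N t).

Lemma is_derive_kappa y : eym_ode_at r W V N M y ->
  is_derive k y (1 - k y ^ 2 + 2 * V y ^ 2 / r y ^ 2).
Proof.
  intros (Hr & HN & Dr & DW & DV & DN & _). unfold k, kappa in *.
  auto_derive.
  - repeat split; try (eexists; eassumption); nra.
  - rewrite_derive Dr; rewrite_derive DW; rewrite_derive DV; rewrite_derive DN.
    field; lra.
Qed.

Lemma is_derive_lower_potential y : eym_ode_at r W V N M y ->
  is_derive (fun t => (k t - 1) * (exp t * r t * M t)) y (2 * exp y * M y * V y ^ 2 / r y).
Proof.
  intros Hy. pose proof (is_derive_kappa y Hy) as Dk.
  destruct Hy as (Hr & HN & Dr & _ & _ & _ & DM).
  auto_derive.
  - repeat split; eexists; eassumption.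
  - rewrite_derive Dk; rewrite_derive Dr; rewrite_derive DM.
    unfold k, kappa. field; lra.
Qed.

Lemma is_derive_upper_potential y : eym_ode_at r W V N M y ->
  is_derive (fun t => (2 - N t - k t) * (exp (2 * t) * M t / r t)) y
    (3 * (1 - N y) ^ 2 * (exp (2 * y) * M y / r y)).
Proof.
  intros Hy. pose proof (is_derive_kappa y Hy) as Dk.
  destruct Hy as (Hr & HN & Dr & _ & _ & DN & DM).
  auto_derive.
  - repeat split; try (eexists; eassumption); lra.
  - rewrite_derive Dk; rewrite_derive Dr; rewrite_derive DN; rewrite_derive DM.
    unfold k, kappa. field; lra.
Qed.

End Monotone_quantities.

Lemma little_o_e2_ext (f g : R -> R) :
  (forall x, f x = g x) -> little_o_e2 f -> little_o_e2 g.
Proof. intros Hfg. apply is_lim_ext. intros x. now rewrite Hfg. Qed.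

Lemma little_o_e2_quotient (f : R -> R) (c : R) :
  little_o_e2 (fun x => f x - c * exp (2 * x)) ->
  is_lim (fun x => f x / exp (2 * x)) m_infty c.
Proof.
  intros Ho. apply (is_lim_ext (fun x => (f x - c * exp (2 * x)) / exp (2 * x) + c)).
  - intros x. field. apply Rgt_not_eq, exp_pos.
  - eapply is_lim_finite_eq; [is_lim_finite | ring].
Qed.

Lemma is_lim_of_quotient_e2 (f : R -> R) (c : R) :
  is_lim (fun x => f x / exp (2 * x)) m_infty c -> is_lim f m_infty 0.
Proof.
  intros Hq. apply (is_lim_ext (fun x => f x / exp (2 * x) * exp (2 * x))).
  - intros x. field. apply Rgt_not_eq, exp_pos.
  - eapply is_lim_finite_eq; [is_lim_finite | ring].
Qed.

Section Regular_origin.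

Variables (b x1 : R) (r W V N delta : R -> R).
Hypothesis Hreg : regular_at_origin b r W V N delta.
Hypothesis Hr : forall x, x < x1 -> r x <> 0.

Lemma is_lim_div_radius (f : R -> R) (c : R) :
  is_lim (fun x => f x / exp (2 * x)) m_infty c ->
  is_lim (fun x => f x / r x) m_infty 0.
Proof.
  intros Hq. destruct Hreg as [Hradius _].
  apply (is_lim_ext_loc (fun x => f x / exp (2 * x) * exp x * / (r x / exp x))).
  - exists x1. intros x Hx. replace (2 * x) with (x + x) by ring. rewrite exp_plus.
    pose proof (Hr x Hx). pose proof (Rgt_not_eq _ _ (exp_pos x)). field. tauto.
  - eapply is_lim_finite_eq; [is_lim_finite | field].
Qed.

Lemma regular_at_origin_is_lim_N : is_lim N m_infty 1.
Proof.
  destruct Hreg as (_ & _ & _ & HoN & _).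
  apply (is_lim_ext (fun x => (N x - 1) + 1)); [intros x; ring|].
  assert (HN1 : is_lim (fun x => N x - 1) m_infty 0).
  { apply (is_lim_of_quotient_e2 _ (- 2 * b ^ 2)), little_o_e2_quotient.
    revert HoN. apply little_o_e2_ext. intros x. ring. }
  eapply is_lim_finite_eq; [is_lim_finite | ring].
Qed.

Lemma regular_at_origin_is_lim_lapse :
  is_lim (fun x => exp (- delta x) * N x) m_infty 1.
Proof.
  destruct Hreg as (_ & _ & _ & _ & Hod).
  assert (Hd : is_lim delta m_infty 0).
  { apply (is_lim_of_quotient_e2 _ (- 4 * b ^ 2)), little_o_e2_quotient.
    revert Hod. apply little_o_e2_ext. intros x. ring. }
  pose proof regular_at_origin_is_lim_N.
  eapply is_lim_finite_eq; [is_lim_finite | rewrite Ropp_0, exp_0; ring].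
Qed.

Lemma regular_at_origin_is_lim_kappa :
  is_lim (fun x => kappa (r x) (W x) (V x) (N x)) m_infty 1.
Proof.
  destruct Hreg as (_ & HoW & HoV & _).
  assert (HW1 : is_lim (fun x => (W x + 1) / exp (2 * x)) m_infty b).
  { apply little_o_e2_quotient. revert HoW. apply little_o_e2_ext. intros x. ring. }
  assert (HW : is_lim W m_infty (-1)).
  { apply (is_lim_ext (fun x => (W x + 1) - 1)); [intros x; ring|].
    pose proof (is_lim_of_quotient_e2 _ _ HW1).
    eapply is_lim_finite_eq; [is_lim_finite | ring]. }
  assert (HWr : is_lim (fun x => (1 - W x ^ 2) / r x) m_infty 0).
  { apply (is_lim_div_radius _ (2 * b)).
    apply (is_lim_ext (fun x => (1 - W x) * ((W x + 1) / exp (2 * x)))).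
    - intros x. field. apply Rgt_not_eq, exp_pos.
    - eapply is_lim_finite_eq; [is_lim_finite | ring]. }
  assert (HVr : is_lim (fun x => V x / r x) m_infty 0).
  { apply (is_lim_div_radius _ (2 * b)), little_o_e2_quotient. exact HoV. }
  pose proof regular_at_origin_is_lim_N.
  apply (is_lim_ext_loc (fun x => / (2 * N x) * (1 + N x * N x + 2 * (V x / r x * (V x / r x))
           - (1 - W x ^ 2) / r x * ((1 - W x ^ 2) / r x)))).
  - exists x1. intros x Hx. unfold kappa. f_equal. field. exact (Hr x Hx).
  - eapply is_lim_finite_eq; [is_lim_finite | field].
Qed.

End Regular_origin.

Lemma nonneg_of_derive_nonneg_is_lim_m_infty (F dF : R -> R) (x0 : R) :
  (forall y, y <= x0 -> is_derive F y (dF y)) ->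
  (forall y, y <= x0 -> 0 <= dF y) ->
  is_lim F m_infty 0 -> 0 <= F x0.
Proof.
  intros HD Hpos Hlim.
  destruct (Rle_or_lt 0 (F x0)) as [Hx0 | Hx0]; [exact Hx0 | exfalso].
  apply is_lim_spec in Hlim.
  destruct (Hlim (mkposreal (- F x0) ltac:(lra))) as [M HM]. simpl in HM.
  set (t := Rmin (M - 1) (x0 - 1)).
  assert (HtM : t < M) by (unfold t; generalize (Rmin_l (M - 1) (x0 - 1)); lra).
  assert (Htx0 : t < x0) by (unfold t; generalize (Rmin_r (M - 1) (x0 - 1)); lra).
  specialize (HM t HtM). rewrite Rminus_0_r in HM. apply Rabs_def2 in HM.
  destruct (MVT_gen F t x0 dF) as [c [Hc Hmvt]];
    rewrite ?Rmin_left, ?Rmax_right in * by lra.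
  - intros y Hy. apply HD. lra.
  - intros y Hy. apply continuity_pt_filterlim, (ex_derive_continuous F).
    exists (dF y). apply HD. lra.
  - assert (0 <= dF c * (x0 - t)) by (apply Rmult_le_pos; [apply Hpos|]; lra).
    lra.
Qed.

Section Comparison.

Variables (r W V N M : R -> R) (x0 : R).
Hypothesis Hode : forall y, y <= x0 -> eym_ode_at r W V N M y.
Hypothesis HMpos : forall y, y <= x0 -> 0 < M y.
Hypothesis Hr : is_lim (fun x => r x / exp x) m_infty 1.
Hypothesis HN : is_lim N m_infty 1.
Hypothesis HM : is_lim M m_infty 1.
Hypothesis Hk : is_lim (fun x => kappa (r x) (W x) (V x) (N x)) m_infty 1.

Let k (t : R) : R := kappa (r t) (W t) (V t) (N t).

Lemma kappa_ge_1 : 1 <= k x0.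
Proof.
  assert (Hpot : 0 <= (k x0 - 1) * (exp x0 * r x0 * M x0)).
  { apply (nonneg_of_derive_nonneg_is_lim_m_infty
      (fun t => (k t - 1) * (exp t * r t * M t))
      (fun y => 2 * exp y * M y * V y ^ 2 / r y)).
    - intros y Hy. exact (is_derive_lower_potential r W V N M y (Hode y Hy)).
    - intros y Hy. destruct (Hode y Hy) as (Hry & _). pose proof (HMpos y Hy).
      pose proof (exp_pos y) as Hexp. pose proof (pow2_ge_0 (V y)) as HV2.
      assert (0 < / r y) by (apply Rinv_0_lt_compat; exact Hry).
      unfold Rdiv. apply Rmult_le_pos; [apply Rmult_le_pos; [nra | exact HV2] | lra].
    - apply (is_lim_ext (fun x => (k x - 1) * (exp x * exp x * (r x / exp x) * M x))).
      + intros x. field. apply Rgt_not_eq, exp_pos.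
      + eapply is_lim_finite_eq; [is_lim_finite | ring]. }
  destruct (Hode x0 (Rle_refl x0)) as (Hr0 & _).
  pose proof (HMpos x0 (Rle_refl x0)). pose proof (exp_pos x0).
  assert (0 < exp x0 * r x0 * M x0) by (repeat apply Rmult_lt_0_compat; lra).
  nra.
Qed.

Lemma kappa_le_2_sub_N : k x0 <= 2 - N x0.
Proof.
  assert (Hpot : 0 <= (2 - N x0 - k x0) * (exp (2 * x0) * M x0 / r x0)).
  { apply (nonneg_of_derive_nonneg_is_lim_m_infty
      (fun t => (2 - N t - k t) * (exp (2 * t) * M t / r t))
      (fun y => 3 * (1 - N y) ^ 2 * (exp (2 * y) * M y / r y))).
    - intros y Hy. exact (is_derive_upper_potential r W V N M y (Hode y Hy)).
    - intros y Hy. destruct (Hode y Hy) as (Hry & _). pose proof (HMpos y Hy).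
      pose proof (exp_pos (2 * y)). pose proof (pow2_ge_0 (1 - N y)) as HN2.
      assert (0 < / r y) by (apply Rinv_0_lt_compat; exact Hry).
      unfold Rdiv. apply Rmult_le_pos; [apply Rmult_le_pos; [lra | exact HN2] |].
      repeat apply Rmult_le_pos; lra.
    - apply (is_lim_ext_loc (fun x => (2 - N x - k x) * (exp x * M x * / (r x / exp x)))).
      + exists x0. intros x Hx. destruct (Hode x (Rlt_le _ _ Hx)) as (Hrx & _).
        pose proof (Rgt_not_eq _ _ (exp_pos x)).
        replace (2 * x) with (x + x) by ring. rewrite exp_plus. field. lra.
      + eapply is_lim_finite_eq; [is_lim_finite | ring]. }
  destruct (Hode x0 (Rle_refl x0)) as (Hr0 & _).
  pose proof (HMpos x0 (Rle_refl x0)). pose proof (exp_pos (2 * x0)).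
  assert (0 < / r x0) by (apply Rinv_0_lt_compat; exact Hr0).
  assert (0 < exp (2 * x0) * M x0 / r x0) by (repeat apply Rmult_lt_0_compat; lra).
  nra.
Qed.

End Comparison.

Theorem lemma1 (b : R) (rho_s : Rbar) (r W V N delta : R -> R) :
  eym_solution rho_s r W V N delta ->
  regular_at_origin b r W V N delta ->
  forall x : R, Rbar_lt x rho_s ->
    1 <= kappa (r x) (W x) (V x) (N x) <= 2 - N x.
Proof.
  intros Hsol Hreg x Hx.
  set (M := fun y => exp (- delta y) * N y).
  assert (Hode : forall y, y <= x -> eym_ode_at r W V N M y).
  { intros y Hy. exact (proj2 (Hsol y (Rbar_le_lt_trans y x rho_s Hy Hx))). }
  assert (HMpos : forall y, y <= x -> 0 < M y).
  { intros y Hy. destruct (Hode y Hy) as (_ & HNy & _).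
    apply Rmult_lt_0_compat; [apply exp_pos | exact HNy]. }
  assert (Hr : forall y, y < x -> r y <> 0).
  { intros y Hy. destruct (Hode y (Rlt_le _ _ Hy)) as (Hry & _). lra. }
  pose proof (proj1 Hreg) as Hradius.
  pose proof (regular_at_origin_is_lim_N b r W V N delta Hreg) as HN.
  pose proof (regular_at_origin_is_lim_lapse b r W V N delta Hreg) as HM.
  pose proof (regular_at_origin_is_lim_kappa b x r W V N delta Hreg Hr) as Hk.
  split.
  - apply (kappa_ge_1 r W V N M x); assumption.
  - apply (kappa_le_2_sub_N r W V N M x); assumption.
Qed.
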